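(* Suppose Assumptions 1 and 2 hold. Let $\varpi^*=\mathrm{col}(\Lambda^*,\mathbf z^*,x^* )\in\mathbb R^{Nm}\times\mathbb R^{Mm}\times\mathbb R^n$ satisfy $\mathbf 0\in(\mathfrak A+\mathfrak B)(\varpi^* )$. Then there is $\lambda^*\in\mathbb R^m$ with $\Lambda^*=\mathbf 1_N\otimes\lambda^*$, the pair $(x^*,\lambda^* )$ satisfies the KKT system $$\mathbf 0\in\nabla_{x_i}f_i(x_i^*,x_{-i}^* )+A_i^T\lambda^*+N_{\Omega_i}(x_i^* )\ \ (\forall i\in\{1,\dots,N\}),\qquad \sum_{i=1}^N A_ix_i^*=\sum_{i=1}^N b_i,$$ and $x^*$ is a variational GNE of the game.
   Context: Game: players $i\in\{1,\dots,N\}$ choose $x_i\in\Omega_i\subseteq\mathbb R^{n_i}$; $n=\sum_i n_i$, $x=\mathrm{col}(x_1,\dots,x_N)$, $x_{-i}$ the stack of all $x_j$, $j\neq i$, $\Omega=\prod_i\Omega_i$. Player $i$ has cost $f_i(x_i,x_{-i})$ and private data $A_i\in\mathbb R^{m\times n_i}$, $b_i\in\mathbb R^m$. Shared set $X=\Omega\cap\{x:\sum_iA_ix_i=\sum_ib_i\}$. Pseudo-gradient $F(x)=\mathrm{col}(\nabla_{x_1}f_1(x),\dots,\nabla_{x_N}f_N(x))$. A variational GNE is an $x^*\in X$ with $\langle F(x^* ),x-x^*\rangle\ge0$ for all $x\in X$. Assumption 1: each $\Omega_i$ is closed convex with nonempty interior; $X$ has nonempty relative interior; for every $x_{-i}\in\prod_{j\ne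 i}\Omega_j$ the set $\{x_i\in\Omega_i:(x_i,x_{-i})\in X\}$ has nonempty relative interior; each $f_i$ is continuously differentiable and convex in $x_i$ for fixed $x_{-i}$. Assumption 2: $F$ is $\upsilon$-strongly monotone on $\Omega$ ($\langle F(x)-F(y),x-y\rangle\ge\upsilon\|x-y\|^2$) and $\chi$-Lipschitz on $\Omega$. Graph: $\mathcal G$ is a connected undirected graph on the $N$ players with $M$ edges $e_1,\dots,e_M$, each given an arbitrary orientation. Incidence matrix $V\in\mathbb R^{N\times M}$: $V_{il}=1$ if $e_l$ points to $i$, $V_{il}=-1$ if $e_l$ starts at $i$, $0$ otherwise. $\mathbf V=V\otimes I_m$, $\mathbf A=\mathrm{diag}(A_1,\dots,A_N)\in\mathbb R^{Nm\times n}$, $\mathbf b=\mathrm{col}(b_1,\dots,b_N)$. Operators on $\varpi=\mathrm{col}(\Lambda,\mathbf z,x)$, $\Lambda=\mathrm{col}(\lambda_1,\dots,\lambda_N)\in\mathbb R^{Nm}$, $\mathbf z\in\mathbb R^{Mm}$, $x\in\mathbb R^n$: $\mathfrak A(\varpi)=\mathrm{col}\big(-\mathbf Ax-\mathbf V\mathbf z,\ \mathbf V^T\Lambda,\ \mathbf A^T\Lambda+N_\Omega(x)\big)$ (set-valued, $N_\Omega$ the normal cone of $\Omega$), $\mathfrak B(\varpi)=\mathrm{col}(\mathbf b,\mathbf 0,F(x))$. *)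

From HB Require Import structures.
From mathcomp Require Import all_boot all_order all_algebra.
Set Implicit Arguments. Unset Strict Implicit. Unset Printing Implicit Defensive.
Import Order.TTheory GRing.Theory Num.Theory.
Local Open Scope ring_scope.

Section Defs.
Variable R : realFieldType.

Definition vdot k (u v : 'cV[R]_k) : R := (u^T *m v) 0 0.
Definition sqnorm k (u : 'cV[R]_k) : R := vdot u u.

Definition closed_set k (S : 'cV[R]_k -> Prop) : Prop :=
  forall v, ~ S v -> exists2 e : R, 0 < e &
    forall w, sqnorm (w - v) < e -> ~ S w.
Definition convex_set k (S : 'cV[R]_k -> Prop) : Prop :=
  forall u v (t : R), S u -> S v -> 0 <= t -> t <= 1 ->
    S (t *: u + (1 - t) *: v).
Definition has_nonempty_interior k (S : 'cV[R]_k -> Prop) : Prop :=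
  exists v, exists2 e : R, 0 < e & forall w, sqnorm (w - v) < e -> S w.
Definition aff_hull k (S : 'cV[R]_k -> Prop) (y : 'cV[R]_k) : Prop :=
  exists (p : nat) (P : 'I_p -> 'cV[R]_k) (c : 'I_p -> R),
    [/\ forall j, S (P j), \sum_(j < p) c j = 1 & y = \sum_(j < p) c j *: P j].
Definition rel_interior k (S : 'cV[R]_k -> Prop) (x : 'cV[R]_k) : Prop :=
  S x /\ exists2 e : R, 0 < e &
    forall y, aff_hull S y -> sqnorm (y - x) < e -> S y.
Definition has_nonempty_relint k (S : 'cV[R]_k -> Prop) : Prop :=
  exists x, rel_interior S x.

(** normal cone N_S(x) (empty when x is not in S) *)
Definition normal_cone k (S : 'cV[R]_k -> Prop) (x v : 'cV[R]_k) : Prop :=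
  S x /\ forall y, S y -> vdot v (y - x) <= 0.

Definition has_gradient k (f : 'cV[R]_k -> R) (G : 'cV[R]_k -> 'cV[R]_k) :=
  forall x (eps : R), 0 < eps -> exists2 d : R, 0 < d & forall h,
    sqnorm h < d -> (f (x + h) - f x - vdot (G x) h) ^+ 2 <= eps * sqnorm h.
Definition continuous_map k l (G : 'cV[R]_k -> 'cV[R]_l) :=
  forall x (eps : R), 0 < eps -> exists2 d : R, 0 < d & forall y,
    sqnorm (y - x) < d -> sqnorm (G y - G x) < eps.

(** Stacked strategy profiles x = col(x_1,...,x_N), x_i in R^{n_i}. *)
Variables (N : nat) (n : 'I_N -> nat).
Definition ntot := (\sum_(i < N) n i)%N.

Definition blk (x : 'cV[R]_ntot) (i : 'I_N) : 'cV[R]_(n i) :=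
  @submxcol _ N n 1 x i.

Definition upd (x : 'cV[R]_ntot) (i : 'I_N) (y : 'cV[R]_(n i)) : 'cV[R]_ntot :=
  @mxcol _ N n 1 (fun j =>
    match i =P j with
    | ReflectT e => castmx (congr1 n e, erefl 1%N) y
    | ReflectF _ => blk x j
    end).

Definition OmegaP (Om : forall i : 'I_N, 'cV[R]_(n i) -> Prop)
  (x : 'cV[R]_ntot) : Prop := forall i, Om i (blk x i).

Definition shared_set (m : nat) (Om : forall i : 'I_N, 'cV[R]_(n i) -> Prop)
  (A : forall i : 'I_N, 'M[R]_(m, n i)) (b : 'I_N -> 'cV[R]_m)
  (x : 'cV[R]_ntot) : Prop :=
  OmegaP Om x /\ \sum_(i < N) A i *m blk x i = \sum_(i < N) b i.

Definition is_vGNE (X : 'cV[R]_ntot -> Prop) (F : 'cV[R]_ntot -> 'cV[R]_ntot)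
  (xs : 'cV[R]_ntot) : Prop :=
  X xs /\ forall x, X x -> 0 <= vdot (F xs) (x - xs).

Definition strongly_monotone_on (S : 'cV[R]_ntot -> Prop)
  (F : 'cV[R]_ntot -> 'cV[R]_ntot) (u : R) : Prop :=
  forall x y, S x -> S y -> u * sqnorm (x - y) <= vdot (F x - F y) (x - y).
Definition lipschitz_on (S : 'cV[R]_ntot -> Prop)
  (F : 'cV[R]_ntot -> 'cV[R]_ntot) (c : R) : Prop :=
  forall x y, S x -> S y -> sqnorm (F x - F y) <= c ^+ 2 * sqnorm (x - y).

(** block-diagonal bold A = diag(A_1,...,A_N) in R^{Nm x n} *)
Definition bdiagA (m : nat) (A : forall i : 'I_N, 'M[R]_(m, n i)) :
  'M[R]_((\sum_(i < N) m)%N, ntot) :=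
  @mxblock _ N N (fun _ => m) n (fun i j =>
    match i =P j with
    | ReflectT e => castmx (erefl m, congr1 n e) (A i)
    | ReflectF _ => 0
    end).

Definition consensus (m : nat) (lam : 'cV[R]_m) : 'cV[R]_((\sum_(i < N) m)%N) :=
  @mxcol _ N (fun _ => m) 1 (fun _ => lam).

End Defs.
Arguments upd {R N n} x i y.
Arguments blk {R N n} x i.

(** Graphs: M edges, edge l oriented from [src l] to [tgt l]. *)
Section Graph.
Variables (N M : nat) (src tgt : 'I_M -> 'I_N).

Definition simple_graph : Prop :=
  (forall l, src l != tgt l) /\
  (forall l l', (src l == src l') && (tgt l == tgt l') ||
                (src l == tgt l') && (tgt l == src l') -> l = l').

Definition adj : rel 'I_N := fun i j =>
  [exists l : 'I_M, ((src l == i) && (tgt l == j)) || ((src l == j) && (tgt l == i))].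

Definition connected_graph : Prop := forall i j, connect adj i j.

Definition incidence (R : realFieldType) : 'M[R]_(N, M) :=
  \matrix_(i, l) ((tgt l == i)%:R - (src l == i)%:R).

(** bold V = V (x) I_m, in block form *)
Definition boldV (R : realFieldType) (m : nat) :
  'M[R]_((\sum_(i < N) m)%N, (\sum_(l < M) m)%N) :=
  @mxblock _ N M (fun _ => m) (fun _ => m)
    (fun i l => (incidence R i l)%:M).

End Graph.

Definition boldb (R : realFieldType) (N m : nat) (b : 'I_N -> 'cV[R]_m) :
  'cV[R]_((\sum_(i < N) m)%N) := @mxcol _ N (fun _ => m) 1 b.

(* The condition 0 in (A + B)(varpi* ) splits into three block equations.
   The V^T-equation says that neighbouring multipliers agree, so on a
   connected graph Lambda* is a consensus 1 (x) lambda*.  Summing the first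
   equation over the players kills the V z-term, because every column of an
   incidence matrix sums to zero; this gives the coupling constraint.  The
   last equation, read block by block, is the KKT system, and pairing it with
   x - x* for a feasible x gives the variational inequality, since the
   multiplier term equals <lambda*, sum_i A_i (x_i - x*_i)> and vanishes. *)
From HB Require Import structures.
From mathcomp Require Import all_boot all_order all_algebra.
Set Implicit Arguments. Unset Strict Implicit. Unset Printing Implicit Defensive.
Import Order.TTheory GRing.Theory Num.Theory.
Local Open Scope ring_scope.

Section InnerProduct.
Variable R : realFieldType.

Lemma vdot0r k (u : 'cV[R]_k) : vdot u 0 = 0.
Proof. by rewrite /vdot mulmx0 mxE. Qed.

Lemma vdotDl k (u v w : 'cV[R]_k) : vdot (v + w) u = vdot v u + vdot w u.
Proof. by rewrite /vdot linearD /= mulmxDl mxE. Qed.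

Lemma vdotNl k (u v : 'cV[R]_k) : vdot (- v) u = - vdot v u.
Proof. by rewrite /vdot linearN /= mulNmx mxE. Qed.

Lemma vdot_sumr k p (u : 'cV[R]_k) (v : 'I_p -> 'cV[R]_k) :
  vdot u (\sum_i v i) = \sum_i vdot u (v i).
Proof. by rewrite /vdot mulmx_sumr summxE. Qed.

Lemma vdot_trmxl k l (B : 'M[R]_(k, l)) u w : vdot (B^T *m u) w = vdot u (B *m w).
Proof. by rewrite /vdot trmx_mul trmxK mulmxA. Qed.

Lemma vdot_submxcol p (p_ : 'I_p -> nat) (u v : 'cV[R]_(\sum_i p_ i)) :
  vdot u v = \sum_i vdot (submxcol u i) (submxcol v i).
Proof.
by rewrite /vdot -{1}(submxcolK u) -{1}(submxcolK v) tr_mxcol mul_mxrow_mxcol summxE.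
Qed.

End InnerProduct.

Lemma sum_scale_eq (R : pzRingType) (V : lmodType R) p (k : 'I_p) (L : 'I_p -> V) :
  \sum_(i < p) (k == i)%:R *: L i = L k.
Proof.
rewrite (bigD1 k) //= eqxx scale1r big1 ?addr0 // => j ne.
by rewrite eq_sym (negbTE ne) scale0r.
Qed.

Section Blocks.
Variables (R : realFieldType) (N : nat) (n : 'I_N -> nat).

Lemma blk_upd_eq (x : 'cV[R]_(ntot n)) i y : blk (upd x i y) i = y.
Proof.
rewrite /blk /upd mxcolK; case: (i =P i) => // e.
by rewrite (eq_irrelevance e erefl).
Qed.

Lemma blk_upd_neq (x : 'cV[R]_(ntot n)) i j y : i != j -> blk (upd x i y) j = blk x j.
Proof. by move=> ne; rewrite /blk /upd mxcolK; case: (i =P j) => // e; rewrite e eqxx in ne. Qed.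

Lemma OmegaP_upd (Om : forall i, 'cV[R]_(n i) -> Prop) x i y :
  OmegaP Om x -> Om i y -> OmegaP Om (upd x i y).
Proof.
move=> Hx Hy j; case: (eqVneq i j) => [<-|ne]; first by rewrite blk_upd_eq.
by rewrite blk_upd_neq.
Qed.

Lemma vdot_upd_sub (v x : 'cV[R]_(ntot n)) i y :
  vdot v (upd x i y - x) = vdot (blk v i) (y - blk x i).
Proof.
rewrite vdot_submxcol (bigD1 i) //= big1 ?addr0.
  by rewrite submxcolB; have := blk_upd_eq x y; rewrite /blk => ->.
move=> j; rewrite eq_sym submxcolB => /(blk_upd_neq x y).
by rewrite /blk => ->; rewrite subrr vdot0r.
Qed.

Lemma normal_cone_OmegaP_blk (Om : forall i, 'cV[R]_(n i) -> Prop) x v i :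
  normal_cone (OmegaP Om) x v -> normal_cone (Om i) (blk x i) (blk v i).
Proof.
case=> Hx Hv; split=> [|y Hy]; first exact: Hx.
by have := Hv _ (OmegaP_upd Hx Hy); rewrite vdot_upd_sub.
Qed.

Variable m : nat.

Lemma submxcol_bdiagA (A : forall i, 'M[R]_(m, n i)) (x : 'cV[R]_(ntot n)) i :
  submxcol (bdiagA A *m x) i = A i *m blk x i.
Proof.
rewrite /bdiagA -{1}(submxcolK x) mul_mxblock_mxrow mxcolK (bigD1 i) //= big1 ?addr0.
  by case: (i =P i) => // e; rewrite (eq_irrelevance e erefl).
move=> j ne; case: (i =P j) => [e|_]; last by rewrite mul0mx.
by rewrite e eqxx in ne.
Qed.

Lemma submxcol_tr_bdiagA (A : forall i, 'M[R]_(m, n i)) (L : 'cV[R]_(\sum_(i < N) m)) i :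
  submxcol ((bdiagA A)^T *m L) i = (A i)^T *m submxcol L i.
Proof.
rewrite /bdiagA tr_mxblock -{1}(submxcolK L) mul_mxblock_mxrow mxcolK.
rewrite (bigD1 i) //= big1 ?addr0.
  by case: (i =P i) => // e; rewrite (eq_irrelevance e erefl).
move=> j ne; case: (j =P i) => [e|_]; last by rewrite trmx0 mul0mx.
by rewrite e eqxx in ne.
Qed.

Lemma vdot_tr_bdiagA_consensus (A : forall i, 'M[R]_(m, n i)) lam (y : 'cV[R]_(ntot n)) :
  vdot ((bdiagA A)^T *m consensus N lam) y = vdot lam (\sum_i A i *m blk y i).
Proof.
rewrite vdot_sumr vdot_submxcol; apply: eq_bigr => i _.
by rewrite submxcol_tr_bdiagA mxcolK vdot_trmxl.
Qed.

End Blocks.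

Section Incidence.
Variables (R : realFieldType) (N M m : nat) (src tgt : 'I_M -> 'I_N).

Lemma submxcol_tr_boldV (L : 'cV[R]_(\sum_(i < N) m)) l :
  submxcol ((boldV src tgt R m)^T *m L) l = submxcol L (tgt l) - submxcol L (src l).
Proof.
rewrite /boldV tr_mxblock -{1}(submxcolK L) mul_mxblock_mxrow mxcolK.
under eq_bigr do rewrite tr_scalar_mx mul_scalar_mx mxE scalerBl.
by rewrite sumrB !sum_scale_eq.
Qed.

(* Each column of an incidence matrix has one +1 and one -1 entry. *)
Lemma sum_submxcol_boldV (z : 'cV[R]_(\sum_(l < M) m)) :
  \sum_i submxcol (boldV src tgt R m *m z) i = 0.
Proof.
rewrite /boldV -{1}(submxcolK z).
under eq_bigr do rewrite mul_mxblock_mxrow mxcolK.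
rewrite exchange_big big1 //= => l _.
under eq_bigr do rewrite mul_scalar_mx mxE scalerBl.
by rewrite sumrB !(sum_scale_eq _ (fun=> submxcol z l)) subrr.
Qed.

Lemma tr_boldV_kernel_consensus (L : 'cV[R]_(\sum_(i < N) m)) :
  connected_graph src tgt -> (boldV src tgt R m)^T *m L = 0 ->
  exists lam, L = consensus N lam.
Proof.
move=> Hconn HL.
have edge_eq l : submxcol L (src l) = submxcol L (tgt l).
  have /eqP := congr1 (fun u => submxcol u l) HL.
  by rewrite /= submxcol_tr_boldV submxcol0 subr_eq0 => /eqP.
have path_eq i j : submxcol L i = submxcol L j.
  case/connectP: (Hconn i j) => p; elim: p i => [|k p IH] i /=; first by move=> _ ->.
  case/andP=> /existsP[l /orP[] /andP[/eqP <- /eqP <-]] Hp Hj;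
    by rewrite -(IH _ Hp Hj) edge_eq.
case: (pickP 'I_N) => [i0 _|N0].
  by exists (submxcol L i0); apply/mxcolP => i; rewrite mxcolK; apply: path_eq.
by exists 0; apply/mxcolP => i; have := N0 i.
Qed.

End Incidence.

Lemma coupling_constraint (R : realFieldType) (N M m : nat) (n : 'I_N -> nat)
    (A : forall i, 'M[R]_(m, n i)) (b : 'I_N -> 'cV[R]_m) (src tgt : 'I_M -> 'I_N)
    (z : 'cV[R]_(\sum_(l < M) m)) (x : 'cV[R]_(ntot n)) :
  - (bdiagA A *m x) - boldV src tgt R m *m z + boldb b = 0 ->
  \sum_i A i *m blk x i = \sum_i b i.
Proof.
move=> H.
have block_eq i : A i *m blk x i = b i - submxcol (boldV src tgt R m *m z) i.
  have := congr1 (fun u => submxcol u i) H.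
  rewrite /= !submxcolD !submxcolN submxcol0 submxcol_bdiagA /boldb mxcolK => E.
  by rewrite -(addr0 (A i *m blk x i)) -{1}E addrA addNKr addrC.
by rewrite (eq_bigr _ (fun i _ => block_eq i)) sumrB sum_submxcol_boldV subr0.
Qed.

Theorem theorem1
  (R : realFieldType) (N M m : nat) (n : 'I_N -> nat)
  (Om : forall i : 'I_N, 'cV[R]_(n i) -> Prop)
  (f : 'I_N -> 'cV[R]_(ntot n) -> R)
  (A : forall i : 'I_N, 'M[R]_(m, n i)) (b : 'I_N -> 'cV[R]_m)
  (src tgt : 'I_M -> 'I_N)
  (G : 'I_N -> 'cV[R]_(ntot n) -> 'cV[R]_(ntot n))
  (F : 'cV[R]_(ntot n) -> 'cV[R]_(ntot n))
  (ups chi : R)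
  (* the communication graph: connected, simple, arbitrarily oriented *)
  (Hsimple : simple_graph src tgt)
  (Hconn : connected_graph src tgt)
  (* Assumption 1 *)
  (HOm : forall i, [/\ closed_set (Om i), convex_set (Om i)
                     & has_nonempty_interior (Om i)])
  (HX : has_nonempty_relint (shared_set Om A b))
  (HXi : forall (i : 'I_N) (x : 'cV[R]_(ntot n)),
      (forall j, j != i -> Om j (blk x j)) ->
      has_nonempty_relint (fun y => Om i y /\ shared_set Om A b (upd x i y)))
  (Hgrad : forall i, has_gradient (f i) (G i))
  (Hcont : forall i, continuous_map (G i))
  (Hconv : forall (i : 'I_N) (x : 'cV[R]_(ntot n)) (y z : 'cV[R]_(n i)) (t : R),
      0 <= t -> t <= 1 ->
      f i (upd x i (t *: y + (1 - t) *: z))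
        <= t * f i (upd x i y) + (1 - t) * f i (upd x i z))
  (* F is the pseudo-gradient: F(x) = col(grad_{x_i} f_i(x)) *)
  (HF : forall x i, blk (F x) i = blk (G i x) i)
  (* Assumption 2 *)
  (Hups : 0 < ups) (Hmono : strongly_monotone_on (OmegaP Om) F ups)
  (Hchi : 0 < chi) (Hlip : lipschitz_on (OmegaP Om) F chi)
  (* varpi* = col(Lam, z, xs) with 0 in (frakA + frakB)(varpi* ) *)
  (Lam : 'cV[R]_(\sum_(i < N) m)%N) (z : 'cV[R]_(\sum_(l < M) m)%N)
  (xs : 'cV[R]_(ntot n))
  (H1 : - (bdiagA A *m xs) - boldV src tgt R m *m z + boldb b = 0)
  (H2 : (boldV src tgt R m)^T *m Lam = 0)
  (H3 : exists v, normal_cone (OmegaP Om) xs v /\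
                  (bdiagA A)^T *m Lam + v + F xs = 0) :
  exists lam : 'cV[R]_m,
    [/\ Lam = consensus N lam,
        (forall i, exists v, normal_cone (Om i) (blk xs i) v /\
                     blk (F xs) i + (A i)^T *m lam + v = 0),
        \sum_(i < N) A i *m blk xs i = \sum_(i < N) b i
      & is_vGNE (shared_set Om A b) F xs].
Proof.
have [lam HLam] := tr_boldV_kernel_consensus Hconn H2; subst Lam.
have Hsum := coupling_constraint H1.
case: H3 => v [Hv Heq]; exists lam; split=> //.
- move=> i; exists (blk v i); split; first exact: normal_cone_OmegaP_blk.
  have := congr1 (fun u => submxcol u i) Heq.
  rewrite /= !submxcolD submxcol0 submxcol_tr_bdiagA mxcolK => <-.
  by rewrite [RHS]addrC addrA.
- split=> [|x [Hx Hsumx]]; first by split; [case: Hv|].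
  have -> : F xs = - ((bdiagA A)^T *m consensus N lam + v).
    by apply/eqP; rewrite -addr_eq0 addrC Heq.
  rewrite vdotNl vdotDl vdot_tr_bdiagA_consensus.
  under eq_bigr do rewrite /blk submxcolB mulmxBr.
  rewrite sumrB Hsumx Hsum subrr vdot0r add0r oppr_ge0.
  by case: Hv => _; apply.
Qed.
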